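(* Let $d\ge 1$, $p>1$ and $s\in(0,1)$ with $sp<d$, and let $\mathcal{C}=C(d,p)\,\frac{s(1-s)}{(d-sp)^{p-1}}$ be the fractional Sobolev constant described in the context. Then for every $u\in W^{s,p}(\mathbb{R}^d)$ with $\int_{\mathbb{R}^d}|u(x)|^p\,dx=1$, \[ \int_{\mathbb{R}^d}|u(x)|^p\log|u(x)|\,dx\le \frac{d}{sp^2}\log\left(\mathcal{C}\int_{\mathbb{R}^d}\int_{\mathbb{R}^d}\frac{|u(x)-u(y)|^p}{|x-y|^{d+sp}}\,dx\,dy\right). \]
   Context: $W^{s,p}(\mathbb{R}^d)$ is the completion of $C_c^\infty(\mathbb{R}^d)$ under the norm $(\|u\|_{L^p}^p+[u]_{W^{s,p}}^p)^{1/p}$, where $[u]_{W^{s,p}(\mathbb{R}^d)}^p=\int_{\mathbb{R}^d}\int_{\mathbb{R}^d}\frac{|u(x)-u(y)|^p}{|x-y|^{d+sp}}dx\,dy$. $C(d,p)>0$ is a constant depending only on $d$ and $p$ such that, with $\mathcal{C}=C(d,p)\frac{s(1-s)}{(d-sp)^{p-1}}$ and $p^*_s=\frac{dp}{d-sp}$, the fractional Sobolev inequality $\|u\|_{L^{p^*_s}(\mathbb{R}^d)}\le \mathcal{C}^{1/p}[u]_{W^{s,p}(\mathbb{R}^d)}$ holds for all $s\in(0,1)$ with $sp<d$ and all $u\in W^{s,p}(\mathbb{R}^d)$ (such a constant exists by a theorem of Maz'ya and Shaposhnikova). *)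

From HB Require Import structures.
From mathcomp Require Import all_boot all_order all_algebra.
From mathcomp Require Import all_classical all_reals all_analysis.
Set Implicit Arguments. Unset Strict Implicit. Unset Printing Implicit Defensive.
Import Order.TTheory GRing.Theory Num.Def Num.Theory.
Import numFieldNormedType.Exports.
Local Open Scope classical_set_scope.
Local Open Scope ring_scope.

(* R^d, as row vectors, equipped with its Borel sigma-algebra
   (generated by the open sets of the product = Euclidean topology). *)
Definition Rd (R : realType) (d : nat) :=
  g_sigma_algebraType (@open 'rV[R]_d).

Definition enorm (R : realType) (d : nat) (x : 'rV[R]_d) : R :=
  Num.sqrt (\sum_(i < d) x ord0 i ^+ 2).

Definition box (R : realType) (d : nat) (a b : 'rV[R]_d) : set (Rd R d) :=
  [set x : 'rV[R]_d | forall i : 'I_d, a ord0 i <= x ord0 i <= b ord0 i].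

(* mu is the Lebesgue measure on the Borel sets of R^d: the (unique)
   Borel measure giving every box its volume. *)
Definition is_lebesgue (R : realType) (d : nat)
  (mu : {measure set (Rd R d) -> \bar R}) : Prop :=
  forall a b : 'rV[R]_d, (forall i, a ord0 i <= b ord0 i) ->
    mu (box a b) = (\prod_(i < d) (b ord0 i - a ord0 i))%:E.

Definition gagliardo_p (R : realType) (d : nat)
  (mu : {measure set (Rd R d) -> \bar R}) (s p : R) (u : Rd R d -> R) : \bar R :=
  (\int[mu]_x \int[mu]_y
     ((powR `|u x - u y| p) /
        powR (enorm ((x : 'rV[R]_d) - (y : 'rV[R]_d))) (d%:R + s * p))%:E)%E.

Definition gagliardo (R : realType) (d : nat)
  (mu : {measure set (Rd R d) -> \bar R}) (s p : R) (u : Rd R d -> R) : \bar R :=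
  poweR (gagliardo_p mu s p u) p^-1.

(* Membership in W^{s,p}(R^d): (a Borel representative of) a function with
   finite L^p norm and finite Gagliardo seminorm. *)
Definition in_Wsp (R : realType) (d : nat)
  (mu : {measure set (Rd R d) -> \bar R}) (s p : R) (u : Rd R d -> R) : Prop :=
  [/\ measurable_fun setT u,
      ('N[mu]_(p%:E)[EFin \o u] < +oo)%E &
      (gagliardo_p mu s p u < +oo)%E].

Definition sob_const (R : realType) (d : nat) (Cdp s p : R) : R :=
  Cdp * (s * (1 - s)) / powR (d%:R - s * p) (p - 1).

Definition pstar (R : realType) (d : nat) (s p : R) : R := d%:R * p / (d%:R - s * p).

(* The standing assumption on C(d,p): the fractional Sobolev inequality
   holds with constant sob_const for all s in (0,1) with sp<d and all u. *)
Definition sobolev_ineq (R : realType) (d : nat)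
  (mu : {measure set (Rd R d) -> \bar R}) (Cdp p : R) : Prop :=
  forall s : R, 0 < s < 1 -> s * p < d%:R ->
  forall u : Rd R d -> R, in_Wsp mu s p u ->
    ('N[mu]_((pstar d s p)%:E)[EFin \o u] <=
       (powR (sob_const d Cdp s p) p^-1)%:E * gagliardo mu s p u)%E.

(** For every t > 0 the tangent-line bound  ln y <= y - 1  at y = x^(r-p)/t
    gives  (r - p) x^p ln x <= x^p (ln t - 1) + x^r / t.  Integrating it
    against a u with  int |u|^p = 1  and  int |u|^r <= t  bounds the entropy
    int |u|^p ln|u|  by  ln t / (r - p).  With r = p* the Sobolev inequality
    provides  t = (C [u]^p)^(p*/p), and  (p*/p) / (p* - p) = d / (s p^2). *)
From HB Require Import structures.
From mathcomp Require Import all_boot all_order all_algebra.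
From mathcomp Require Import all_classical all_reals all_analysis.
From mathcomp Require Import measurable_realfun ring lra.
Import Order.TTheory GRing.Theory Num.Def Num.Theory.
Import numFieldNormedType.Exports.
Local Open Scope classical_set_scope.
Local Open Scope ring_scope.

Lemma ln_le_subr1 {R : realType} (x : R) : 0 < x -> ln x <= x - 1.
Proof. by move=> x_gt0; rewrite -[x in ln x](subrKC 1) le_ln1Dx // ltrBrDl subrr. Qed.

Lemma powR_mul_ln_le {R : realType} (a p r t : R) :
  0 <= a -> 0 < p < r -> 0 < t ->
  (r - p) * (powR a p * ln a) <= powR a p * (ln t - 1) + powR a r / t.
Proof.
move=> a_ge0 /andP[p_gt0 p_lt_r] t_gt0.
have r_gt0 : 0 < r by exact: lt_trans p_lt_r.
have [->|a_neq0] := eqVneq a 0.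
  by rewrite !powR0 ?gt_eqF // !mul0r mulr0 addr0.
have a_gt0 : 0 < a by rewrite lt_neqAle eq_sym a_neq0.
have q_gt0 : 0 < r - p by rewrite subr_gt0.
have apq_gt0 : 0 < powR a (r - p) by rewrite powR_gt0.
have := ln_le_subr1 _ (divr_gt0 apq_gt0 t_gt0).
rewrite ln_div ?posrE // ln_powR => tangent.
have -> : powR a r = powR a p * powR a (r - p).
  by rewrite -powRD ?a_neq0 ?implybT // subrKC.
rewrite mulrCA -mulrA -mulrDr ler_pM2l ?powR_gt0 //; lra.
Qed.

Section integral_powR.
Context {d} {T : measurableType d} {R : realType} (mu : {measure set T -> \bar R}).
Local Open Scope ereal_scope.

Lemma le_integral_integrable_ub (f g : T -> \bar R) :
  measurable_fun [set: T] f -> mu.-integrable [set: T] g ->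
  (forall x, f x <= g x) -> \int[mu]_x f x <= \int[mu]_x g x.
Proof.
move=> mf /integrableP[mg _] fg; rewrite integralE [leRHS]integralE.
apply: leeB; apply: ge0_le_integral => //.
- exact: measurable_funepos.
- exact: measurable_funepos.
- by move=> x _; apply: (@funepos_le _ _ [set: T]) => [y _|]; rewrite ?in_setT.
- exact: measurable_funeneg.
- exact: measurable_funeneg.
- by move=> x _; apply: (@funeneg_le _ _ [set: T]) => [y _|]; rewrite ?in_setT.
Qed.

Context {u : T -> R} (measurable_u : measurable_fun [set: T] u).

Lemma measurable_powR_normr (r : R) : measurable_fun [set: T] (fun x => powR `|u x| r).
Proof. exact/(measurableT_comp (measurable_powR _))/measurableT_comp. Qed.

Lemma integrable_powR_normr (r : R) :
  \int[mu]_x (powR `|u x| r)%:E < +oo ->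
  mu.-integrable [set: T] (fun x => (powR `|u x| r)%:E).
Proof.
move=> fin; apply/integrableP; split; first exact/measurable_EFinP/measurable_powR_normr.
by under eq_integral do rewrite gee0_abs ?lee_fin ?powR_ge0 //.
Qed.

Lemma integral_powR_normr_le (r c : R) : (0 < r)%R -> (0 <= c)%R ->
  'N[mu]_(r%:E)[EFin \o u] <= c%:E ->
  \int[mu]_x (powR `|u x| r)%:E <= (powR c r)%:E.
Proof.
move=> r_gt0 c_ge0 N_le_c.
have N_fin : 'N[mu]_(r%:E)[EFin \o u] \is a fin_num.
  by rewrite ge0_fin_numE ?Lnorm_ge0 // (le_lt_trans N_le_c) ?ltry.
have -> : \int[mu]_x (powR `|u x| r)%:E = 'N[mu]_(r%:E)[EFin \o u] `^ r.
  by rewrite poweR_Lnorm ?gt_eqF //; apply: eq_integral => x _; rewrite abse_EFin poweR_EFin.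
move: N_le_c; rewrite -(fineK N_fin) poweR_EFin !lee_fin.
by apply: ge0_ler_powR; rewrite ?nnegrE ?fine_ge0 ?Lnorm_ge0 // ltW.
Qed.

Lemma integral_powR_ln_le (p r t : R) : (0 < p < r)%R -> (0 < t)%R ->
  \int[mu]_x (powR `|u x| p)%:E = 1 ->
  \int[mu]_x (powR `|u x| r)%:E <= t%:E ->
  \int[mu]_x (powR `|u x| p * ln `|u x|)%:E <= (ln t / (r - p))%:E.
Proof.
move=> pr t_gt0 normalized int_r_le_t.
have q_gt0 : (0 < r - p)%R by case/andP: pr => _; rewrite subr_gt0.
set a := ((ln t - 1) / (r - p))%R; set b := (t^-1 / (r - p))%R.
have iP : mu.-integrable [set: T] (fun x => (powR `|u x| p)%:E).
  by apply: integrable_powR_normr; rewrite normalized ltry.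
have iR := integrable_powR_normr _ (le_lt_trans int_r_le_t (ltry t)).
have iaP := integrableZl measurableT a iP; have ibR := integrableZl measurableT b iR.
apply: (le_trans (le_integral_integrable_ub _ _ _ (integrableD measurableT iaP ibR) _)).
- apply/measurable_EFinP/measurable_funM; first exact: measurable_powR_normr.
  exact/(measurableT_comp (@measurable_ln R))/measurableT_comp.
- move=> x /=; rewrite -!EFinM -EFinD lee_fin -(ler_pM2l q_gt0).
  have -> : ((r - p) * (a * powR `|u x| p + b * powR `|u x| r) =
             powR `|u x| p * (ln t - 1) + powR `|u x| r / t)%R.
    by rewrite /a /b; field; rewrite !gt_eqF.
  exact: powR_mul_ln_le.
rewrite integralD // !(integralZl measurableT) // normalized mule1.
have -> : (ln t / (r - p) = a + b * t)%R by rewrite /a /b; field; rewrite !gt_eqF.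
by rewrite EFinD leeD2lE // [(b * t)%:E]EFinM lee_pmul2l ?lte_fin ?divr_gt0 ?invr_gt0.
Qed.

End integral_powR.

Section sobolev_exponents.
Context (R : realType) (d : nat) (p s : R).
Hypotheses (p_gt0 : 0 < p) (s_gt0 : 0 < s) (sp_lt_d : s * p < d%:R).

Let dsp_gt0 : 0 < d%:R - s * p. Proof. by rewrite subr_gt0. Qed.

Lemma pstar_subr : pstar d s p - p = s * p ^+ 2 / (d%:R - s * p).
Proof. by rewrite /pstar; field; rewrite gt_eqF. Qed.

Lemma pstar_gt : p < pstar d s p.
Proof. by rewrite -subr_gt0 pstar_subr divr_gt0 // mulr_gt0 // exprn_gt0. Qed.

Lemma pstar_divr_subr : pstar d s p / p / (pstar d s p - p) = d%:R / (s * p ^+ 2).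
Proof.
rewrite pstar_subr /pstar; field.
by rewrite !gt_eqF // mulr_gt0 // exprn_gt0.
Qed.

Lemma sob_const_gt0 (Cdp : R) : 0 < Cdp -> s < 1 -> 0 < sob_const d Cdp s p.
Proof.
move=> Cdp_gt0 s_lt1.
by rewrite /sob_const divr_gt0 ?powR_gt0 // !mulr_gt0 // subr_gt0.
Qed.

End sobolev_exponents.

Lemma gagliardo_p_ge0 (R : realType) (d : nat) (mu : {measure set (Rd R d) -> \bar R})
  (s p : R) (u : Rd R d -> R) : (0 <= gagliardo_p mu s p u)%E.
Proof.
apply: integral_ge0 => x _; apply: integral_ge0 => y _.
by rewrite lee_fin divr_ge0 // powR_ge0.
Qed.

Theorem theorem1p1 (R : realType) (d : nat) (mu : {measure set (Rd R d) -> \bar R})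
  (Cdp p s : R) :
  is_lebesgue mu ->
  (1 <= d)%N -> 1 < p -> 0 < s < 1 -> s * p < d%:R ->
  0 < Cdp -> sobolev_ineq mu Cdp p ->
  forall u : Rd R d -> R, in_Wsp mu s p u ->
  (\int[mu]_x (powR `|u x| p)%:E = 1)%E ->
  (\int[mu]_x (powR `|u x| p * ln `|u x|)%:E <=
     (d%:R / (s * p ^+ 2) * ln (sob_const d Cdp s p * fine (gagliardo_p mu s p u)))%:E)%E.
Proof.
move=> _ _ p_gt1 /[dup] s01 /andP[s_gt0 s_lt1] sp_lt_d Cdp_gt0 sobolev u Wu normalized.
have [measurable_u _ G_fin] := Wu.
have p_gt0 : 0 < p by exact: lt_trans p_gt1.
set C := sob_const d Cdp s p; set g := fine (gagliardo_p mu s p u).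
have C_gt0 : 0 < C by exact: sob_const_gt0.
have GE : gagliardo_p mu s p u = g%:E.
  by rewrite fineK // ge0_fin_numE ?gagliardo_p_ge0.
have g_ge0 : 0 <= g by rewrite -lee_fin -GE gagliardo_p_ge0.
have pstar_gt_p : p < pstar d s p by exact: pstar_gt.
have pp_gt0 : 0 < p < pstar d s p by rewrite p_gt0 pstar_gt_p.
have M_le : (\int[mu]_x (powR `|u x| (pstar d s p))%:E <=
             (powR (C * g) (pstar d s p / p))%:E)%E.
  rewrite [_ / p]mulrC powRrM; apply: integral_powR_normr_le => //.
  - exact: lt_trans pstar_gt_p.
  - exact: powR_ge0.
  have := sobolev s s01 sp_lt_d u Wu.
  by rewrite /gagliardo GE poweR_EFin -EFinM -powRM // ltW.
have [Cg0|Cg_neq0] := eqVneq (C * g) 0.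
  (* ln 0 = 0: the bound obtained with t = 1 is already nonpositive *)
  rewrite Cg0 ln0 // mulr0.
  have := integral_powR_ln_le mu measurable_u _ _ _ pp_gt0 ltr01 normalized.
  rewrite ln1 mul0r; apply; rewrite (le_trans M_le) // Cg0 powR0 ?lee_fin //.
  by rewrite mulf_neq0 ?gt_eqF ?invr_gt0 // (lt_trans p_gt0).
have Cg_gt0 : 0 < C * g by rewrite lt_neqAle eq_sym Cg_neq0 mulr_ge0 // ltW.
have := integral_powR_ln_le mu measurable_u _ _ _ pp_gt0 (powR_gt0 _ Cg_gt0) normalized M_le.
by rewrite ln_powR mulrAC pstar_divr_subr.
Qed.
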